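(* For every integer $n\ge 3$, the sum of all principal minors of order $n-1$ of $L_S$ equals $$\sum_{i=1}^{n}\det(L_S[i])=\frac{n}{2\sqrt{3}}\,(p^{n}-q^{n}),$$ where $L_S[i]$ is the matrix obtained from $L_S$ by deleting its $i$-th row and $i$-th column. Equivalently, if $\det(xI-L_S)=x^n+a_1x^{n-1}+\dots+a_{n-1}x+a_n$, then $(-1)^{n-1}a_{n-1}=\frac{n}{2\sqrt3}(p^n-q^n)$.
   Context: $p=2+\sqrt3$, $q=2-\sqrt3$. $L_S$ denotes the $n\times n$ matrix with all diagonal entries equal to $4$, entries $(i,i+1)$ and $(i+1,i)$ equal to $-1$ for $1\le i\le n-1$, entries $(1,n)$ and $(n,1)$ equal to $+1$, and all other entries $0$. *)

From mathcomp Require Import all_boot all_order all_algebra.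
Set Implicit Arguments. Unset Strict Implicit. Unset Printing Implicit Defensive.
Import Order.TTheory GRing.Theory Num.Theory.
Local Open Scope ring_scope.

(* The matrix L_S (0-indexed): diagonal 4, entries (i,i+1),(i+1,i) equal -1,
   corner entries (0,n-1),(n-1,0) equal +1, all others 0.
   For n >= 3 the three cases are disjoint. *)
Definition LS (R : nzRingType) (n : nat) : 'M[R]_n :=
  \matrix_(i < n, j < n)
    if i == j then 4%:R
    else if (i.+1 == j :> nat) || (j.+1 == i :> nat) then -1
    else if ((i == 0 :> nat) && (j == n.-1 :> nat)) ||
            ((j == 0 :> nat) && (i == n.-1 :> nat)) then 1
    else 0.

Definition del_rc (R : nzRingType) (n : nat) (A : 'M[R]_n) (i : 'I_n)
  : 'M[R]_n.-1 := row' i (col' i A).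

From mathcomp Require Import all_boot all_order all_algebra.
From mathcomp Require Import perm zify ring.
Import Order.TTheory GRing.Theory Num.Theory.
Local Open Scope ring_scope.

(* Let T_m be the m x m tridiagonal matrix with 4 on the diagonal
   and -1 next to it (the path analogue of L_S).
   1. Every principal minor of order n-1 of L_S equals det T_(n-1): deleting
      vertex i of the n-cycle leaves the path i+1, ..., n-1, 0, ..., i-1, and
      relabelling along this path, together with flipping the sign of the
      vertices lying past the wrap-around n-1 -> 0 (which turns the +1 corner
      entry into -1), conjugates L_S[i] into T_(n-1) by a signed permutation
      matrix.  Such a conjugation preserves the determinant.
   2. Expanding along the last row and column, D_m = det T_m satisfies
      D_(m+2) = 4 D_(m+1) - D_m with D_0 = 1, D_1 = 4.  Since p and q are the
      roots of X^2 - 4X + 1, this gives D_m (p - q) = p^(m+1) - q^(m+1).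
   3. Hence the sum is n D_(n-1) = n (p^n - q^n) / (p - q), and p - q = 2 sqrt 3. *)

Lemma det_signed_perm_conj (R : comPzRingType) (m : nat) (s : {perm 'I_m})
    (d : 'I_m -> R) (A B : 'M[R]_m) :
  (forall j, d j * d j = 1) ->
  (forall j k, A (s j) (s k) = d j * d k * B j k) -> \det A = \det B.
Proof.
move=> d_sq hA; pose D := diag_mx (\row_j d j).
have conjA : row_perm s (col_perm s A) = D *m B *m D.
  by apply/matrixP => j k; rewrite mul_mx_diag mul_diag_mx !mxE hA; ring.
have detD_sq : \det D * \det D = 1.
  rewrite det_diag -big_split /=; apply: big1 => j _; rewrite mxE; exact: d_sq.
have := congr1 determinant conjA.
rewrite row_permE col_permE !det_mulmx !det_perm odd_permV.
rewrite mulrAC detD_sq mul1r.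
by case: (odd_perm s); rewrite /= ?expr1 ?expr0 => <-; ring.
Qed.

(* The entries of the tridiagonal matrix T_m = tridiag_mx R m, indexed by naturals so that they
   can be compared across matrices of different sizes. *)
Definition tridiag (R : nzRingType) (a b : nat) : R :=
  if a == b then 4%:R else if (a.+1 == b) || (b.+1 == a) then -1 else 0.

Definition tridiag_mx (R : nzRingType) (m : nat) : 'M[R]_m :=
  \matrix_(a < m, b < m) tridiag R a b.

Lemma tridiag_far (R : nzRingType) (a b : nat) :
  (a.+1 < b)%N || (b.+1 < a)%N -> tridiag R a b = 0.
Proof. by move=> far; rewrite /tridiag; do 2 (case: ifP => ?; first lia). Qed.

Lemma tridiag_next (R : nzRingType) (a : nat) : tridiag R a.+1 a = -1.
Proof. by rewrite /tridiag; case: ifP => ?; [lia | rewrite eqxx orbT]. Qed.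

Lemma tridiag_prev (R : nzRingType) (a : nat) : tridiag R a a.+1 = -1.
Proof. by rewrite /tridiag; case: ifP => ?; [lia | rewrite eqxx]. Qed.

Lemma bump_ord (m : nat) (a : 'I_m) : bump m a = a.
Proof. by rewrite /bump leqNgt ltn_ord. Qed.

Lemma tridiag_mx_minor (R : nzRingType) (m : nat) :
  row' ord_max (col' ord_max (tridiag_mx R m.+1)) = tridiag_mx R m.
Proof. by apply/matrixP => a b; rewrite !mxE /= !bump_ord. Qed.

Lemma sign_double (R : nzRingType) (m : nat) : (-1) ^+ (m + m) = 1 :> R.
Proof. by rewrite addnn -mul2n mulnC exprM sqrr_sign. Qed.

(* The minor of T_(m+2) at the last row and the second-to-last column is
   -det T_m: its last column has the single nonzero entry -1 in its last row. *)
Lemma tridiag_mx_offdiag_minor (R : comNzRingType) (m : nat) :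
  \det (row' ord_max (col' (widen_ord (leqnSn m.+1) ord_max) (tridiag_mx R m.+2)))
    = - \det (tridiag_mx R m).
Proof.
set M := row' _ _.
rewrite (expand_det_col _ ord_max) big_ord_recr /= big1 ?add0r; last first.
  move=> j _; rewrite /M !mxE /= tridiag_far ?mul0r //= /bump /=.
  by have := ltn_ord j; case: leqP => /= ? ?; lia.
rewrite /cofactor /M !mxE /= sign_double mul1r /bump ltnn leqnn add0n add1n tridiag_prev.
have -> : row' ord_max (col' ord_max M) = tridiag_mx R m.
  apply/matrixP => -[a ha] [b hb]; rewrite !mxE /=.
  by congr tridiag; rewrite /bump; do ! case: leqP => ? /=; lia.
by rewrite mulN1r.
Qed.

Lemma det_tridiag_rec (R : comNzRingType) (m : nat) :
  \det (tridiag_mx R m.+2) = 4%:R * \det (tridiag_mx R m.+1) - \det (tridiag_mx R m).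
Proof.
rewrite (expand_det_row _ ord_max) !big_ord_recr /= big1 ?add0r; last first.
  move=> j _; rewrite !mxE /= tridiag_far ?mul0r //.
  by apply/orP; right; have := ltn_ord j; lia.
rewrite /cofactor tridiag_mx_minor tridiag_mx_offdiag_minor !mxE /= tridiag_next /tridiag eqxx.
by rewrite sign_double addSn exprS sign_double; ring.
Qed.

Lemma det_tridiag_closed (R : comNzRingType) (x y : R) (m : nat) :
  x ^+ 2 = 4%:R * x - 1 -> y ^+ 2 = 4%:R * y - 1 ->
  \det (tridiag_mx R m) * (x - y) = x ^+ m.+1 - y ^+ m.+1.
Proof.
move=> hx hy.
have pow_rec (z : R) k : z ^+ 2 = 4%:R * z - 1 -> z ^+ k.+2 = 4%:R * z ^+ k.+1 - z ^+ k.
  by move=> hz; rewrite -addn2 exprD hz exprS; ring.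
suff [] : \det (tridiag_mx R m) * (x - y) = x ^+ m.+1 - y ^+ m.+1 /\
          \det (tridiag_mx R m.+1) * (x - y) = x ^+ m.+2 - y ^+ m.+2 by [].
elim: m => [|m [IH1 IH2]].
  by rewrite det_mx00 det_mx11 mxE /tridiag /= hx hy mul1r !expr1; split=> //; ring.
split=> //; rewrite det_tridiag_rec (pow_rec x m.+1 hx) (pow_rec y m.+1 hy).
by rewrite mulrBl -mulrA IH2 IH1; ring.
Qed.

Ltac case_ifs := repeat match goal with |- context [if ?c then _ else _] =>
  lazymatch c with context [if _ then _ else _] => fail
  | _ => case: (boolP c) => ? /= end end.

(* Throughout, n = k+3 >= 3 is the size of L_S and i the deleted index. *)
Section PrincipalMinor.
Variables (R : comNzRingType) (k : nat) (i : 'I_k.+3).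

(* The vertex of the n-cycle (n = k+3) reached a+1 steps after i. *)
Definition cyc (a : nat) : nat :=
  if (i + a.+1 < k.+3)%N then (i + a.+1)%N else (i + a.+1 - k.+3)%N.

(* Its position among the vertices remaining after deleting i. *)
Definition cyc_pos (a : nat) : nat := if (cyc a < i)%N then cyc a else (cyc a).-1.

Lemma cyc_pos_lt (a : 'I_k.+2) : (cyc_pos a < k.+2)%N.
Proof. by have := ltn_ord a; have := ltn_ord i; rewrite /cyc_pos /cyc; case_ifs; lia. Qed.

Definition cyc_ord (a : 'I_k.+2) : 'I_k.+2 := Ordinal (cyc_pos_lt a).

Lemma cyc_ord_inj : injective cyc_ord.
Proof.
move=> a b /(congr1 val) /= same_pos; apply/val_inj; move: same_pos.
by have := ltn_ord a; have := ltn_ord b; have := ltn_ord i; rewrite /cyc_pos /cyc; case_ifs; lia.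
Qed.

Lemma bump_cyc_pos (a : 'I_k.+2) : bump i (cyc_pos a) = cyc a.
Proof.
by have := ltn_ord a; have := ltn_ord i; rewrite /bump /cyc_pos /cyc; case_ifs; lia.
Qed.

(* The sign flip for the vertices lying past the wrap-around n-1 -> 0. *)
Definition wrap_sign (a : 'I_k.+2) : R := if (i + a.+1 < k.+3)%N then 1 else -1.

Lemma det_principal_minor : \det (del_rc (LS R k.+3) i) = \det (tridiag_mx R k.+2).
Proof.
apply: (@det_signed_perm_conj _ _ (perm cyc_ord_inj) wrap_sign).
  by move=> a; rewrite /wrap_sign; case: ifP => _; rewrite ?mulr1 ?mulrNN ?mulr1.
move=> a b; rewrite /del_rc !mxE !permE -val_eqE /= !bump_cyc_pos.
rewrite /cyc /tridiag /wrap_sign.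
have := ltn_ord a; have := ltn_ord b; have := ltn_ord i.
move: (nat_of_ord a) (nat_of_ord b) (nat_of_ord i) => x y z.
by case_ifs; try (move=> *; exfalso; lia); move=> *; ring.
Qed.

End PrincipalMinor.

Theorem fact1 (R : rcfType) (n : nat) (hn : (3 <= n)%N) :
  let p : R := 2 + Num.sqrt 3 in
  let q : R := 2 - Num.sqrt 3 in
  \sum_(i < n) \det (del_rc (LS R n) i)
    = n%:R / (2 * Num.sqrt 3) * (p ^+ n - q ^+ n).
Proof.
move=> p q; case: n hn => [|[|[|k]]] // _.
have sqrt3_sq : Num.sqrt 3 ^+ 2 = 3 :> R by rewrite sqr_sqrtr // ler0n.
have sqrt3_neq0 : Num.sqrt 3 != 0 :> R by rewrite sqrtr_eq0 -ltNge ltr0n.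
have p_root : p ^+ 2 = 4%:R * p - 1 by rewrite /p sqrrD sqrt3_sq; ring.
have q_root : q ^+ 2 = 4%:R * q - 1 by rewrite /q sqrrB sqrt3_sq; ring.
rewrite (eq_bigr (fun _ => \det (tridiag_mx R k.+2))) => [|i _]; last exact: det_principal_minor.
rewrite sumr_const card_ord -(@det_tridiag_closed R p q k.+2 p_root q_root).
have -> : p - q = 2 * Num.sqrt 3 by rewrite /p /q; ring.
by rewrite -mulr_natr; field.
Qed.
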